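(* Let $F$ be a global function field with full constant field $k=\mathbb{F}_q$, let $x\in F$ be transcendental over $k$ with $n=[F:k(x)]$ and $\gcd(n,q)=1$, and let $S=\{P_1,\dots,P_{|S|}\}$ be a finite set of places of $F$ containing all infinite places of $F/k(x)$. If $\{b_1,\dots,b_{|S|-1}\}$ is an LLL-reduced basis of the $S$-unit lattice $\Lambda_S$, then \[ \max_{1\le i\le |S|-1}\|b_i\|_\infty\le 2^{(|S|-1)(|S|-2)/4}R_S. \]
   Context: The infinite places of $F/k(x)$ are the poles of $x$. $O_S^\times$ denotes the group of $S$-units of $F$. With a fixed ordering of $S$, let $\Phi_S:F^\times\to\mathbb{Z}^{|S|}$, $\alpha\mapsto(-v_{P_1}(\alpha)\deg P_1,\dots,-v_{P_{|S|}}(\alpha)\deg P_{|S|})$, where $v_P$ is the discrete valuation at $P$. The $S$-unit lattice is $\Lambda_S=\Phi_S(O_S^\times)$, a lattice of rank $|S|-1$ in $\mathbb{Z}^{|S|}$, and $R_S=\det\Lambda_S$ is its determinant (covolume). For $v\in\mathbb{Z}^{|S|}$, $\|v\|_\infty$ is the maximum absolute value of its entries. *)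

From HB Require Import structures.
From mathcomp Require Import all_boot all_order all_algebra all_field.
From mathcomp Require Import reals.
Set Implicit Arguments. Unset Strict Implicit. Unset Printing Implicit Defensive.
Import Order.TTheory GRing.Theory Num.Theory.
Local Open Scope ring_scope.

(* Function field setting.  K is the finite field k = F_q, kX := k(x) is the *)
(* rational function field {fraction {poly K}}, and F is a finite extension *)
(* of k(x) (a fieldExtType over kX); x is the image of the indeterminate.    *)
Section FunctionField.
Variables (K : finFieldType) (F : fieldExtType {fraction {poly K}}).

Definition kF (c : K) : F := (@FracField.tofrac _ (c%:P))%:A.

Definition xF : F := (@FracField.tofrac _ ('X : {poly K}))%:A.

Definition full_constant_field : Prop :=
  forall a : F, (exists p : {poly K}, p != 0 /\ root (map_poly kF p) a) ->
    exists c : K, a = kF c.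

(* A place of F/k, represented by its normalized discrete valuation
   v_P : F -> int (the value at 0 is irrelevant and never used). *)
Definition is_place (v : F -> int) : Prop :=
  [/\ (forall a b, a != 0 -> b != 0 -> v (a * b) = v a + v b),
      (forall a b, a != 0 -> b != 0 -> a + b != 0 ->
         Num.min (v a) (v b) <= v (a + b)),
      (forall c : K, c != 0 -> v (kF c) = 0) &
      (exists t : F, t != 0 /\ v t = 1)].

Definition same_place (v w : F -> int) : Prop :=
  forall a : F, a != 0 -> v a = w a.

Definition in_valring (v : F -> int) (a : F) : bool := (a == 0) || (0 <= v a).
Definition in_maxideal (v : F -> int) (a : F) : bool := (a == 0) || (0 < v a).

Definition residue_indep (v : F -> int) (m : nat) (a : 'I_m -> F) : Prop :=
  (forall i, in_valring v (a i)) /\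
  (forall c : 'I_m -> K, (exists i, c i != 0) ->
     ~~ in_maxideal v (\sum_i kF (c i) * a i)).

Definition place_degree (v : F -> int) (d : nat) : Prop :=
  (exists a : 'I_d -> F, residue_indep v a) /\
  (forall a : 'I_d.+1 -> F, ~ residue_indep v a).

Definition infinite_place (v : F -> int) : Prop := is_place v /\ v xF < 0.

Definition is_Sunit (s : nat) (P : 'I_s -> F -> int) (a : F) : Prop :=
  a != 0 /\
  forall w, is_place w -> (forall i, ~ same_place w (P i)) -> w a = 0.

Definition PhiS (s : nat) (P : 'I_s -> F -> int) (deg : 'I_s -> nat) (a : F)
  : 'rV[int]_s := \row_i (- (P i a * (deg i)%:Z)).

Definition in_SunitLattice (s : nat) (P : 'I_s -> F -> int)
  (deg : 'I_s -> nat) (u : 'rV[int]_s) : Prop :=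
  exists a : F, is_Sunit P a /\ PhiS P deg a = u.

End FunctionField.

Definition is_lattice_basis (s m : nat) (L : 'rV[int]_s -> Prop)
  (b : 'I_m -> 'rV[int]_s) : Prop :=
  [/\ (forall i, L (b i)),
      (forall z : 'I_m -> int, \sum_i z i *: b i = 0 -> forall i, z i = 0) &
      (forall u, L u -> exists z : 'I_m -> int, u = \sum_i z i *: b i)].

Section LLL.
Variable R : realType.

Definition dotr (s : nat) (u v : 'rV[R]_s) : R := \sum_j u 0 j * v 0 j.

Definition toR (s : nat) (u : 'rV[int]_s) : 'rV[R]_s := map_mx intr u.

(* Gram--Schmidt orthogonalization of a sequence of vectors:
   b*_i = b_i - sum_{j<i} mu_{ij} b*_j,  mu_{ij} = <b_i,b*_j>/<b*_j,b*_j> *)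
Fixpoint gs_aux (s : nat) (acc : seq 'rV[R]_s) (bs : seq 'rV[R]_s)
  : seq 'rV[R]_s :=
  match bs with
  | [::] => acc
  | v :: vs =>
      gs_aux (rcons acc (v - \sum_(w <- acc) (dotr v w / dotr w w) *: w)) vs
  end.

Definition gso (s m : nat) (b : 'I_m -> 'rV[R]_s) (i : nat) : 'rV[R]_s :=
  nth 0 (gs_aux [::] [seq b j | j <- enum 'I_m]) i.

Definition gs_mu (s m : nat) (b : 'I_m -> 'rV[R]_s) (i j : 'I_m) : R :=
  dotr (b i) (gso b j) / dotr (gso b j) (gso b j).

Definition LLL_reduced (s m : nat) (b : 'I_m -> 'rV[R]_s) : Prop :=
  (forall i j : 'I_m, (j < i)%N -> `|gs_mu b i j| <= 1 / 2) /\
  (forall (i j : 'I_m), i = j.+1 :> nat ->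
     (3 / 4 - gs_mu b i j ^+ 2) * dotr (gso b j) (gso b j)
       <= dotr (gso b i) (gso b i)).

Definition lattice_det (s m : nat) (b : 'I_m -> 'rV[R]_s) : R :=
  Num.sqrt (\det (\matrix_(i < m, j < m) dotr (b i) (b j))).

End LLL.

Definition sup_norm (s : nat) (u : 'rV[int]_s) : int :=
  \big[Num.max/0]_(j < s) `|u 0 j|.

From HB Require Import structures.
From mathcomp Require Import all_boot all_order all_algebra all_field.
From mathcomp Require Import reals.
From mathcomp Require Import lra zify.
Set Implicit Arguments. Unset Strict Implicit. Unset Printing Implicit Defensive.
Import Order.TTheory GRing.Theory Num.Theory.
Local Open Scope ring_scope.

(* Let b*_i be the Gram-Schmidt vectors of the LLL-reduced basis b_0, ..., b_(m-1).
   Size reduction (|mu_ij| <= 1/2) and the Lovasz condition give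
   |b*_j|^2 <= 2^(i-j) |b*_i|^2, hence |b_i|^2 <= 2^i |b*_i|^2, and multiplying,
   prod_i |b_i|^2 <= 2^(m(m-1)/2) prod_i |b*_i|^2 = 2^(m(m-1)/2) det(Gram).
   The b_i are nonzero integer vectors, so |b_i|^2 >= 1 and
   |b_k|_oo^2 <= |b_k|^2 <= prod_i |b_i|^2; taking square roots gives the bound
   with m = |S| - 1. *)

Section DotProduct.
Variables (R : realType) (s : nat).
Implicit Types (u v w : 'rV[R]_s).

Lemma dotrC u v : dotr u v = dotr v u.
Proof. by apply: eq_bigr => j _; rewrite mulrC. Qed.

Lemma dotrBl u v w : dotr (u - v) w = dotr u w - dotr v w.
Proof. by rewrite /dotr -sumrB; apply: eq_bigr => j _; rewrite !mxE mulrBl. Qed.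

Lemma dotrZl (a : R) u w : dotr (a *: u) w = a * dotr u w.
Proof. by rewrite /dotr mulr_sumr; apply: eq_bigr => j _; rewrite !mxE mulrA. Qed.

Lemma dotr_suml (I : Type) (r : seq I) (P : pred I) (F : I -> 'rV[R]_s) w :
  dotr (\sum_(i <- r | P i) F i) w = \sum_(i <- r | P i) dotr (F i) w.
Proof.
rewrite /dotr exchange_big /=; apply: eq_bigr => j _.
by rewrite summxE mulr_suml.
Qed.

Lemma dotr0r u : dotr u 0 = 0.
Proof. by rewrite /dotr big1 // => j _; rewrite mxE mulr0. Qed.

Lemma dotr_ge0 u : 0 <= dotr u u.
Proof. by apply: sumr_ge0 => j _; rewrite -expr2 sqr_ge0. Qed.

Lemma dotr_self_eq0 u : dotr u u = 0 -> u = 0.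
Proof.
move=> /psumr_eq0P u0; apply/rowP => j; rewrite mxE.
by apply/eqP; rewrite -sqrf_eq0 expr2 u0 // => k _; rewrite -expr2 sqr_ge0.
Qed.

End DotProduct.

Section GramSchmidtSeq.
Variables (R : realType) (s : nat).
Implicit Types (acc bs : seq 'rV[R]_s).

Lemma gs_aux_cat acc bs :
  exists2 t, gs_aux acc bs = acc ++ t & size t = size bs.
Proof.
elim: bs acc => [|v vs IH] acc /=; first by exists [::]; rewrite ?cats0.
set x := (v - _); have [t -> st] := IH (rcons acc x).
by exists (x :: t); rewrite ?cat_rcons //= st.
Qed.

Lemma nth_gs_aux bs acc i : (i < size bs)%N ->
  nth 0 (gs_aux acc bs) (size acc + i) = nth 0 bs i -
    \sum_(w <- take (size acc + i) (gs_aux acc bs))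
       (dotr (nth 0 bs i) w / dotr w w) *: w.
Proof.
elim: bs acc i => [|v vs IH] acc [|i] //= lt_i.
  set x := (v - _); have [t -> _] := gs_aux_cat (rcons acc x) vs.
  by rewrite addn0 cat_rcons nth_cat ltnn subnn /= take_size_cat.
set x := (v - _); have := IH (rcons acc x) i lt_i.
by rewrite size_rcons addSnnS.
Qed.

End GramSchmidtSeq.

Section Gram.
Variables (R : realType) (s m : nat).

Definition vecs_mx (v : 'I_m -> 'rV[R]_s) : 'M[R]_(m, s) := \matrix_(i, k) v i 0 k.

Definition gram (v : 'I_m -> 'rV[R]_s) : 'M[R]_m := \matrix_(i, j) dotr (v i) (v j).

Lemma gram_vecs_mx v : gram v = vecs_mx v *m (vecs_mx v)^T.
Proof. by apply/matrixP => i j; rewrite !mxE; apply: eq_bigr => k _; rewrite !mxE. Qed.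

End Gram.

Section GramSchmidt.
Variables (R : realType) (s m : nat) (c : 'I_m -> 'rV[R]_s).

Lemma gsoE (j : 'I_m) :
  gso c j = c j - \sum_(k < m | (k < j)%N) gs_mu c j k *: gso c k.
Proof.
rewrite {1}/gso; set bs := map c (enum 'I_m).
have size_bs : size bs = m by rewrite size_map size_enum_ord.
have nth_bs : nth 0 bs j = c j.
  by rewrite (nth_map j) ?nth_ord_enum // size_enum_ord.
have [t gsE size_t] := gs_aux_cat [::] bs.
have := @nth_gs_aux R s bs [::] j; rewrite size_bs ltn_ord add0n => -> //.
rewrite nth_bs; congr (_ - _).
have size_take : size (take j (gs_aux [::] bs)) = j.
  by rewrite size_take gsE /= size_t size_bs ltn_ord.
rewrite (big_nth 0) size_take big_mkord.
rewrite (big_ord_widen m (fun k => let w := nth 0 (take j (gs_aux [::] bs)) k in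
   (dotr (c j) w / dotr w w) *: w)) ?(ltnW (ltn_ord j)) //.
by apply: eq_bigr => k lt_kj; rewrite nth_take.
Qed.

Lemma gso_orthogonal (i k : 'I_m) : (k < i)%N -> dotr (gso c i) (gso c k) = 0.
Proof.
have [n] := ubnP i; elim: n => // n IHn in i k *; rewrite ltnS => le_in lt_ki.
(* A null b*_k must be split off: gs_mu divides by its square norm. *)
have [/dotr_self_eq0 ->|nz_k] := eqVneq (dotr (gso c k) (gso c k)) 0.
  exact: dotr0r.
rewrite gsoE dotrBl dotr_suml (bigD1 k) //= big1 ?addr0; last first.
  move=> l /andP[lt_li neq_lk]; rewrite dotrZl.
  case: (ltngtP l k) => [lt_lk|lt_kl|eq_lk].
  - by rewrite dotrC IHn ?mulr0 ?(leq_trans lt_ki le_in).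
  - by rewrite IHn ?mulr0 ?(leq_trans lt_li le_in).
  - by rewrite (val_inj eq_lk) eqxx in neq_lk.
by rewrite dotrZl /gs_mu divfK // subrr.
Qed.

Definition gs_mumx : 'M[R]_m :=
  \matrix_(i, j) (if (j < i)%N then gs_mu c i j else (i == j)%:R).

Definition gso_sqnorms : 'rV[R]_m := \row_i dotr (gso c i) (gso c i).

Lemma vecs_mx_gso : vecs_mx c = gs_mumx *m vecs_mx (gso c).
Proof.
apply/matrixP => i k; rewrite /vecs_mx /gs_mumx !mxE.
rewrite -[c i](subrK (\sum_(j < m | (j < i)%N) gs_mu c i j *: gso c j)) -gsoE.
rewrite mxE summxE [RHS](bigD1 i) //= !mxE ltnn eqxx mul1r; congr (_ + _).
rewrite big_mkcond [RHS]big_mkcond; apply: eq_bigr => j _ /=; rewrite !mxE.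
case: ltngtP => [lt_ji|lt_ij|/val_inj->]; last by rewrite eqxx.
  by rewrite -val_eqE (ltn_eqF lt_ji).
by rewrite eq_sym -val_eqE (ltn_eqF lt_ij) mul0r.
Qed.

Lemma gram_gso : gram (gso c) = diag_mx gso_sqnorms.
Proof.
apply/matrixP => i j; rewrite !mxE.
case: (ltngtP i j) => [lt_ij|lt_ji|/val_inj->]; last by rewrite eqxx.
- by rewrite dotrC gso_orthogonal // -val_eqE (ltn_eqF lt_ij).
- by rewrite gso_orthogonal // -val_eqE (gtn_eqF lt_ji).
Qed.

Lemma gram_factor : gram c = gs_mumx *m diag_mx gso_sqnorms *m gs_mumx^T.
Proof.
rewrite gram_vecs_mx vecs_mx_gso trmx_mul mulmxA -[_ *m vecs_mx _ *m _]mulmxA.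
by rewrite -gram_vecs_mx gram_gso.
Qed.

Lemma det_gram : \det (gram c) = \prod_(i < m) dotr (gso c i) (gso c i).
Proof.
have det_mumx : \det gs_mumx = 1.
  rewrite det_trig; first by rewrite big1 // => i _; rewrite mxE ltnn eqxx.
  apply/is_trig_mxP => i j lt_ij.
  by rewrite mxE ltnNge ltnW //= -val_eqE (ltn_eqF lt_ij).
rewrite gram_factor !det_mulmx det_tr det_diag det_mumx mul1r mulr1.
by apply: eq_bigr => i _; rewrite mxE.
Qed.

Lemma dotr_gso_expand (i : 'I_m) :
  dotr (c i) (c i) = \sum_j gs_mumx i j ^+ 2 * dotr (gso c j) (gso c j).
Proof.
have := congr1 (fun M : 'M[R]_m => M i i) gram_factor; rewrite /= !mxE => ->.
by apply: eq_bigr => j _; rewrite mul_mx_diag !mxE mulrAC expr2.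
Qed.

End GramSchmidt.

Lemma sum_exp2_gap (R : realFieldType) i :
  \sum_(j < i) (2 : R) ^+ (i - j) = 2 ^+ i.+1 - 2.
Proof.
elim: i => [|i IH]; first by rewrite big_ord0 expr1 subrr.
rewrite big_ord_recl subn0.
under eq_bigr => j _ do rewrite lift0 subSS.
by rewrite IH [in RHS]exprS; lra.
Qed.

Lemma exp2_geometric_le (R : realFieldType) i :
  1 + \sum_(j < i) (2 : R) ^+ (i - j) / 4 <= 2 ^+ i.
Proof.
rewrite -mulr_suml sum_exp2_gap exprS.
have : (1 : R) <= 2 ^+ i by apply: exprn_ege1; lra.
lra.
Qed.

Section LLLReduced.
Variables (R : realType) (s m : nat) (c : 'I_m -> 'rV[R]_s).
Hypothesis c_LLL : LLL_reduced c.

Lemma LLL_mu_sqr_le (i j : 'I_m) : (j < i)%N -> gs_mu c i j ^+ 2 <= 1 / 4.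
Proof. by move=> /(c_LLL.1 i j); rewrite ler_norml => /andP[]; nra. Qed.

Lemma LLL_gso_sqnorm_step (i j : 'I_m) : i = j.+1 :> nat ->
  dotr (gso c j) (gso c j) <= 2 * dotr (gso c i) (gso c i).
Proof.
move=> ij; have lovasz := c_LLL.2 i j ij.
have mu_le : gs_mu c i j ^+ 2 <= 1 / 4 by apply: LLL_mu_sqr_le; rewrite ij.
have slack : 0 <= (1 / 4 - gs_mu c i j ^+ 2) * dotr (gso c j) (gso c j).
  by rewrite mulr_ge0 ?dotr_ge0 // subr_ge0.
by move: lovasz slack; set mu := gs_mu c i j; set a := dotr (gso c j) _; nra.
Qed.

Lemma LLL_gso_sqnorm_le (i j : 'I_m) : (j <= i)%N ->
  dotr (gso c j) (gso c j) <= 2 ^+ (i - j) * dotr (gso c i) (gso c i).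
Proof.
move=> /subnK; move: (i - j)%N => n; elim: n j => [|n IHn] j ij.
  by rewrite expr0 mul1r (_ : j = i) //; apply: val_inj.
have lt_j1m : (j.+1 < m)%N by have := ltn_ord i; lia.
apply: le_trans (LLL_gso_sqnorm_step (i := Ordinal lt_j1m) erefl) _.
rewrite exprS -mulrA ler_pM2l //; apply: IHn.
by rewrite /= -addSnnS.
Qed.

Lemma LLL_sqnorm_le (i : 'I_m) :
  dotr (c i) (c i) <= 2 ^+ i * dotr (gso c i) (gso c i).
Proof.
pose N (j : nat) := dotr (gso c j) (gso c j).
pose B (j : 'I_m) := (if (j < i)%N then 2 ^+ (i - j) / 4 * N i else 0)
  + (if j == i then N i else 0).
have termwise j : gs_mumx c i j ^+ 2 * N j <= B j.
  rewrite /B mxE; case: ltngtP => [lt_ji|lt_ij|/val_inj->].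
  - rewrite -val_eqE (ltn_eqF lt_ji) addr0.
    apply: le_trans (ler_wpM2r (dotr_ge0 _) (LLL_mu_sqr_le lt_ji)) _.
    by have := LLL_gso_sqnorm_le (ltnW lt_ji); rewrite -/(N j) -/(N i); lra.
  - by rewrite -!val_eqE (ltn_eqF lt_ij) (gtn_eqF lt_ij) expr0n mul0r addr0.
  - by rewrite eqxx add0r expr1n mul1r.
rewrite dotr_gso_expand; apply: le_trans (ler_sum _ (fun j _ => termwise j)) _.
rewrite big_split /= -big_mkcond -big_mkcond /= big_pred1_eq.
rewrite -(big_ord_widen m (fun j => 2 ^+ (i - j) / 4 * N i)) ?(ltnW (ltn_ord i)) //.
rewrite -mulr_suml -[X in _ + X]mul1r -mulrDl addrC.
by apply: ler_wpM2r; [apply: dotr_ge0 | apply: exp2_geometric_le].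
Qed.

Lemma LLL_prod_sqnorm_le :
  \prod_i dotr (c i) (c i) <= 2 ^+ (\sum_(i < m) i) * \det (gram c).
Proof.
rewrite det_gram -prodrXr -big_split /=.
by apply: ler_prod => i _; rewrite dotr_ge0 LLL_sqnorm_le.
Qed.

End LLLReduced.

Section IntegerVectors.
Variables (R : realType) (s : nat).
Implicit Type u : 'rV[int]_s.

Lemma sqr_entry_le_dotr u k : ((u 0 k)%:~R : R) ^+ 2 <= dotr (toR R u) (toR R u).
Proof.
rewrite /dotr (bigD1 k) //= !mxE -expr2 lerDl.
by apply: sumr_ge0 => j _; rewrite -expr2 sqr_ge0.
Qed.

Lemma sup_norm_ge0 u : 0 <= sup_norm u.
Proof. by apply: (big_ind (>= 0)) => // x y; rewrite /Num.max; case: ifP. Qed.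

Lemma sqr_sup_norm_le_dotr u :
  ((sup_norm u)%:~R : R) ^+ 2 <= dotr (toR R u) (toR R u).
Proof.
apply: (big_ind (fun x : int => (x%:~R : R) ^+ 2 <= dotr (toR R u) (toR R u))).
- by rewrite expr0n dotr_ge0.
- by move=> x y; rewrite /Num.max; case: ifP.
- by move=> k _; rewrite intr_norm real_normK ?num_real ?sqr_entry_le_dotr.
Qed.

Lemma dotr_int_ge1 u : u != 0 -> 1 <= dotr (toR R u) (toR R u).
Proof.
move=> /eqP u_neq0; have [k uk_neq0] : exists k, u 0 k != 0.
  apply/existsP; apply: contra_notT u_neq0; rewrite negb_exists => /forallP u0.
  by apply/rowP => k; rewrite mxE; apply/eqP; rewrite -[_ == _]negbK u0.
apply: le_trans (sqr_entry_le_dotr u k).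
have : (1 <= u 0 k ^+ 2)%R by move: uk_neq0; rewrite expr2; lia.
by rewrite -(ler_int R) rmorphXn.
Qed.

End IntegerVectors.

Lemma lattice_basis_neq0 (s m : nat) (L : 'rV[int]_s -> Prop)
  (b : 'I_m -> 'rV[int]_s) : is_lattice_basis L b -> forall i, b i != 0.
Proof.
case=> _ b_free _ i; apply/eqP => bi0.
have := b_free (fun j => (j == i)%:Z); rewrite (bigD1 i) //= big1 ?addr0.
- by rewrite bi0 scaler0 => /(_ erefl i); rewrite eqxx.
- by move=> j /negbTE->; rewrite scale0r.
Qed.

Lemma ler_factor_prod (R : numDomainType) (I : finType) (f : I -> R) (k : I) :
  (forall i, 1 <= f i) -> f k <= \prod_i f i.
Proof.
move=> f_ge1; rewrite (bigD1 k) //= ler_peMr ?(le_trans ler01) //.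
by apply: (big_ind (fun x => 1 <= x)) => //; exact: mulr_ege1.
Qed.

Lemma sum_ord_mul2 n : ((\sum_(i < n) (i : nat)) * 2 = n * n.-1)%N.
Proof.
elim: n => [|n IH]; first by rewrite big_ord0.
by rewrite big_ord_recr /= mulnDl IH; case: n {IH} => //= n; lia.
Qed.

Theorem LLL_sup_norm_le (R : realType) (s m : nat) (b : 'I_m -> 'rV[int]_s) :
  (forall i, b i != 0) -> LLL_reduced (fun i => toR R (b i)) ->
  forall k, ((sup_norm (b k))%:~R : R)
    <= Num.sqrt (Num.sqrt (2 ^+ (m * m.-1))) * lattice_det (fun i => toR R (b i)).
Proof.
move=> b_neq0 b_LLL k; set c := fun i => toR R (b i).
set T := (\sum_(i < m) (i : nat))%N.
have exp_T : (2 : R) ^+ (m * m.-1) = (2 ^+ T) ^+ 2 by rewrite -exprM -sum_ord_mul2.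
have det_ge0 : 0 <= \det (gram c).
  by rewrite det_gram; apply: prodr_ge0 => i _; apply: dotr_ge0.
rewrite exp_T sqrtr_sqr ger0_norm ?exprn_ge0 // -sqrtrM ?exprn_ge0 //.
rewrite -[X in X <= _]ger0_norm ?ler0z ?sup_norm_ge0 // -sqrtr_sqr.
rewrite ler_sqrt ?mulr_ge0 ?exprn_ge0 //.
apply: le_trans (sqr_sup_norm_le_dotr R (b k)) _.
apply: le_trans (LLL_prod_sqnorm_le b_LLL).
by apply: ler_factor_prod => i; apply: dotr_int_ge1.
Qed.

Theorem corollary2p3
  (R : realType)
  (K : finFieldType) (F : fieldExtType {fraction {poly K}})
  (hfull : full_constant_field F)
  (hcop : coprime (\dim {:F}) #|K|)
  (s : nat) (P : 'I_s -> F -> int) (deg : 'I_s -> nat)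
  (hP : forall i, is_place (P i))
  (hdeg : forall i, place_degree (P i) (deg i))
  (hdist : forall i j, same_place (P i) (P j) -> i = j)
  (hinf : forall w, infinite_place w -> exists i, same_place w (P i))
  (b : 'I_s.-1 -> 'rV[int]_s)
  (hbasis : is_lattice_basis (in_SunitLattice P deg) b)
  (hLLL : LLL_reduced (fun i => toR R (b i))) :
  forall i : 'I_s.-1,
    ((sup_norm (b i))%:~R : R)
      <= Num.sqrt (Num.sqrt (2 ^+ ((s - 1) * (s - 2))))
         * lattice_det (fun i => toR R (b i)).
Proof.
have -> : ((s - 1) * (s - 2) = s.-1 * s.-1.-1)%N by lia.
exact: LLL_sup_norm_le (lattice_basis_neq0 hbasis) hLLL.
Qed.
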